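(* Let $(T^{E}_{m},T^{\mathbb{K}}_{m})_{m\in M}$ be a generator for $(\mathcal{FV},E)$, let $X$ be a set, $\mathfrak{K}$ a family of sets with $\bigcup_{K\in\mathfrak{K}}K\subset X$ which is closed under finite unions, and $\pi\colon\bigcup_{m\in M}\omega_m\to X$ a map. Suppose $\mathcal{FV}(\Omega,Y)\subset\operatorname{AP}_{\pi,\mathfrak{K}}(\Omega,Y)$ as a linear subspace for $Y\in\{\mathbb{K},E\}$. Then: (1) if for every $u\in\mathcal{FV}(\Omega)\varepsilon E$, $m\in M$, $x\in\omega_m$ one has $S(u)\in\operatorname{dom}T^E_m$ and $T^E_m(S(u))(x)=u(T^{\mathbb{K}}_{m,x})$, then $S(u)\in\operatorname{AP}_{\pi,\mathfrak{K}}(\Omega,E)$ for all $u\in\mathcal{FV}(\Omega)\varepsilon E$; (2) if for every $e'\in E'$, $f\in\mathcal{FV}(\Omega,E)$, $m\in M$ one has $e'\circ f\in\operatorname{dom}T^{\mathbb{K}}_m$ and $T^{\mathbb{K}}_m(e'\circ f)=e'\circ T^E_m(f)$ on $\omega_m$, then $e'\circ f\in\operatorname{AP}_{\pi,\mathfrak{K}}(\Omega,\mathbb{K})$ for all $e'\in E'$ and $f\in\mathcal{FV}(\Omega,E)$.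
   Context: $\mathbb{K}\in\{\mathbb{R},\mathbb{C}\}$, $E$ a non-trivial locally convex Hausdorff space over $\mathbb{K}$ with directed fundamental system of seminorms $(p_\alpha)_{\alpha\in\mathfrak{A}}$. Let $\Omega$ be a non-empty set, $J,M$ non-empty index sets, $(\omega_m)_{m\in M}$ non-empty sets, $\nu_{j,m}\colon\omega_m\to[0,\infty)$ such that for all $m$, $x\in\omega_m$ some $\nu_{j,m}(x)>0$. For $Y\in\{\mathbb{K},E\}$ (for $\mathbb{K}$ only $|\cdot|$), let $\operatorname{AP}(\Omega,Y)\subset Y^\Omega$ be a linear subspace and $T^Y_m\colon\operatorname{dom}T^Y_m\to Y^{\omega_m}$ linear maps on linear subspaces $\operatorname{dom}T^Y_m\subset Y^\Omega$. $\mathcal{FV}(\Omega,Y):=\{f\in\operatorname{AP}(\Omega,Y)\cap\bigcap_m\operatorname{dom}T^Y_m: |f|_{j,m,\alpha}:=\sup_{x\in\omega_m}p_\alpha(T^Y_m(f)(x))\nu_{j,m}(x)<\infty\ \forall j,m,\alpha\}$ with these seminorms; $\mathcal{FV}(\Omega):=\mathcal{FV}(\Omega,\mathbb{K})$, $T^Y_{m,x}(f):=T^Y_m(f)(x)$. Dom-space: Hausdorff, directed seminorms, and for $Y=\mathbb{K}$ all point evaluations $\delta_x$ are in $\mathcal{FV}(\Omega)'$. Generator for $(\mathcal{FV},E)$: $(T^E_m,T^{\mathbb{K}}_m)_{m\in M}$ with $\mathcal{FV}(\Omega)$, $\mathcal{FV}(\Omega,E)$ dom-spaces over the same $J,M,\omega_m,\nu_{j,m}$.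 $\mathcal{FV}(\Omega)\varepsilon E$: continuous linear maps from $\mathcal{FV}(\Omega)'$ (topology of uniform convergence on absolutely convex compact sets) to $E$, with the topology of uniform convergence on equicontinuous sets; $S(u)(x):=u(\delta_x)$. $\operatorname{AP}_{\pi,\mathfrak{K}}(\Omega,Y)$ is the set of $f\in\bigcap_{m}\operatorname{dom}T^Y_m$ such that for all $\varepsilon>0$, $j\in J$, $m\in M$, $\alpha$ there is $K\in\mathfrak{K}$ with (i) $\sup_{x\in\omega_m,\ \pi(x)\notin K}p_\alpha(T^Y_m(f)(x))\nu_{j,m}(x)<\varepsilon$ and (ii) $\{T^Y_m(f)(x)\nu_{j,m}(x): x\in\omega_m,\ \pi(x)\in K\}$ is precompact in $Y$. *)

From HB Require Import structures.
From mathcomp Require Import all_boot all_order all_algebra.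
From mathcomp Require Import classical_sets reals.
From mathcomp Require Import complex.

Set Implicit Arguments.
Unset Strict Implicit.
Unset Printing Implicit Defensive.
Import Order.TTheory GRing.Theory Num.Theory.
Local Open Scope ring_scope.

Definition RorC (K : numFieldType) : Prop :=
  exists R : realType, K = (R : numFieldType) \/ K = (R[i] : numFieldType).

(* Spaces whose topology is given by a family of seminorms p : A -> V -> K
   (nonnegative values in K; for K = R or C these are the usual real
   seminorms).                                                         *)
Section Seminormed.
Variables (K : numFieldType) (V : lmodType K) (A : Type) (p : A -> V -> K).

Definition seminorm_family : Prop :=
  forall a, (forall x, 0 <= p a x) /\
            (forall x y, p a (x + y) <= p a x + p a y) /\
            (forall (c : K) x, p a (c *: x) = `|c| * p a x).

Definition directed_family : Prop :=
  forall a1 a2, exists a3 (C : K), 0 < C /\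
    forall x, p a1 x <= C * p a3 x /\ p a2 x <= C * p a3 x.

Definition separating_family : Prop :=
  forall x, (forall a, p a x = 0) -> x = 0.

Definition precompact (S : set V) : Prop :=
  forall (n : nat) (as_ : nat -> A) (e : K), 0 < e ->
    exists (N : nat) (z : nat -> V), forall y, S y ->
      exists k, (k < N)%N /\ forall i, (i < n)%N -> p (as_ i) (y - z k) < e.

Definition in_dual (e' : V -> K) : Prop :=
  (forall (c : K) x y, e' (c *: x + y) = c * e' x + e' y) /\
  exists (n : nat) (as_ : nat -> A) (C : K), 0 <= C /\
    forall x (c : K), (forall i, (i < n)%N -> p (as_ i) x <= c) ->
      `|e' x| <= C * c.
End Seminormed.

Definition pK (K : numFieldType) : unit -> K^o -> K := fun _ x => `|(x : K)|.

(* The sets omega_m are subsets of a common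
   type W (so that a map pi on their union is a map on W).  A space Y is
   given by (V, A, p); AP(Omega,Y) is AP; dom T_m is domT m; T_m is T m.  *)
Section FV.
Variables (K : numFieldType) (Omega J M W : Type)
  (omega : M -> set W) (nu : J -> M -> W -> K).
Variables (V : lmodType K) (A : Type) (p : A -> V -> K)
  (AP : set (Omega -> V)) (domT : M -> set (Omega -> V))
  (T : M -> (Omega -> V) -> W -> V).

Definition linear_subspace (S : set (Omega -> V)) : Prop :=
  S (fun _ => 0) /\
  forall (c : K) f g, S f -> S g -> S (fun w => c *: f w + g w).

Definition FV_data_ok : Prop :=
  linear_subspace AP /\ (forall m, linear_subspace (domT m)) /\
  forall m (c : K) f g, domT m f -> domT m g ->
    forall x, omega m x ->
      T m (fun w => c *: f w + g w) x = c *: T m f x + T m g x.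

Definition FVle (j : J) (m : M) (a : A) (f : Omega -> V) (c : K) : Prop :=
  forall x, omega m x -> p a (T m f x) * nu j m x <= c.

Definition FVlt (j : J) (m : M) (a : A) (f : Omega -> V) (e : K) : Prop :=
  exists c, c < e /\ FVle j m a f c.

Definition inFV (f : Omega -> V) : Prop :=
  AP f /\ (forall m, domT m f) /\ forall j m a, exists c, FVle j m a f c.

Definition FV_separating : Prop :=
  forall f, inFV f -> (forall j m a, FVle j m a f 0) -> f = (fun _ => 0).

Definition FV_directed : Prop :=
  forall (i1 i2 : J * M * A), exists (i3 : J * M * A) (C : K), 0 < C /\
    forall f, inFV f -> forall c, FVle i3.1.1 i3.1.2 i3.2 f c ->
      FVle i1.1.1 i1.1.2 i1.2 f (C * c) /\ FVle i2.1.1 i2.1.2 i2.2 f (C * c).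

Variables (X : Type) (pi : W -> X) (Kfrak : set (set X)).

Definition APpi (f : Omega -> V) : Prop :=
  (forall m, domT m f) /\
  forall (e : K), 0 < e -> forall j m a, exists Kc, Kfrak Kc /\
    (exists c, c < e /\
       forall x, omega m x -> ~ Kc (pi x) -> p a (T m f x) * nu j m x <= c) /\
    precompact p [set y | exists x, omega m x /\ Kc (pi x) /\
                                    y = nu j m x *: T m f x].
End FV.

Section Eps.
Variables (K : numFieldType) (Omega J M W : Type)
  (omega : M -> set W) (nu : J -> M -> W -> K)
  (APK : set (Omega -> K^o)) (domTK : M -> set (Omega -> K^o))
  (TK : M -> (Omega -> K^o) -> W -> K^o).

Definition inFVK := inFV omega nu (@pK K) APK domTK TK.
Definition FVleK := FVle omega nu (@pK K) TK.

Definition FVt := {f : Omega -> K^o | inFVK f}.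

Definition in_FVdual (y : FVt -> K) : Prop :=
  (forall (c : K) (f g h : FVt),
     sval h = (fun w => c *: sval f w + sval g w) -> y h = c * y f + y g) /\
  exists (n : nat) (ix : nat -> J * M) (C : K), 0 <= C /\
    forall (f : FVt) (c : K),
      (forall k, (k < n)%N -> FVleK (ix k).1 (ix k).2 tt (sval f) c) ->
      `|y f| <= C * c.

Definition delta (x : Omega) : FVt -> K := fun f => sval f x.
Definition TKx (m : M) (x : W) : FVt -> K := fun f => TK m (sval f) x.

Definition FV_open (U : set FVt) : Prop :=
  forall f, U f -> exists (n : nat) (ix : nat -> J * M) (e : K), 0 < e /\
    forall g : FVt,
      (forall k, (k < n)%N ->
         FVlt omega nu (@pK K) TK (ix k).1 (ix k).2 tt
              (fun w => sval g w - sval f w) e) -> U g.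

Definition FV_compact (B : set FVt) : Prop :=
  forall F : set (set FVt), (forall U, F U -> FV_open U) ->
    (forall f, B f -> exists U, F U /\ U f) ->
    exists (n : nat) (Us : nat -> set FVt), (forall k, (k < n)%N -> F (Us k)) /\
      forall f, B f -> exists k, (k < n)%N /\ Us k f.

Definition abs_convex (B : set FVt) : Prop :=
  forall (a b : K) (f g h : FVt), `|a| + `|b| <= 1 ->
    sval h = (fun w => a *: sval f w + b *: sval g w) -> B f -> B g -> B h.

(* u in FV(Omega) eps E: u is a continuous linear map from FV(Omega)'
   (with the topology of uniform convergence on absolutely convex compact
   subsets of FV(Omega)) to E.  Only the values of u on FV(Omega)' matter. *)
Definition in_eps (E : lmodType K) (AE : Type) (pE : AE -> E -> K)
    (u : (FVt -> K) -> E) : Prop :=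
  (forall (c : K) (y1 y2 : FVt -> K), in_FVdual y1 -> in_FVdual y2 ->
     u (fun f => c * y1 f + y2 f) = c *: u y1 + u y2) /\
  forall a : AE, exists (n : nat) (Bs : nat -> set FVt) (C : K),
    (forall k, (k < n)%N -> abs_convex (Bs k) /\ FV_compact (Bs k)) /\ 0 <= C /\
    forall (y : FVt -> K) (c : K), in_FVdual y ->
      (forall k f, (k < n)%N -> Bs k f -> `|y f| <= c) -> pE a (u y) <= C * c.

Definition Smap (E : lmodType K) (u : (FVt -> K) -> E) : Omega -> E :=
  fun x => u (delta x).
End Eps.

Arguments in_FVdual {K Omega J M W} omega nu APK domTK TK y.
Arguments delta {K Omega J M W} omega nu APK domTK TK x f.
Arguments TKx {K Omega J M W} omega nu APK domTK TK m x f.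
Arguments in_eps {K Omega J M W} omega nu APK domTK TK {E AE} pE u.
Arguments Smap {K Omega J M W} omega nu APK domTK TK {E} u x.

From HB Require Import structures.
From mathcomp Require Import all_boot all_order all_algebra.
From mathcomp Require Import classical_sets reals complex boolp ring.
From Stdlib Require List.
Import Order.TTheory GRing.Theory Num.Theory.
Local Open Scope ring_scope.
Local Open Scope classical_set_scope.
Set Implicit Arguments.
Unset Strict Implicit.

(* Part (2): a continuous functional e' is dominated by a multiple of a single
   seminorm p_a, so the tail estimate and the precompactness defining
   AP_{pi,K} pass from f to e' o f.

   Part (1): continuity of u gives p_a(u y) <= C sup_{f in B} |y f| for a
   compact B in FV(Omega), and nu(x) T^E_m(S u)(x) = u(nu(x) T^K_{m,x}).  So it
   suffices that the family {nu T^K_m f : f in B} of functions on omega_m is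
   uniformly small outside some K in Kfrak and uniformly totally bounded (every
   point is uniformly close to one of finitely many points).  Both properties
   hold for a single element of AP_{pi,K}(Omega), survive finite unions (Kfrak
   being closed under finite unions) and uniform approximation, and compactness
   of B approximates the family uniformly by finitely many of its members. *)

Lemma bigcup_II_ind (T : Type) (P : set T -> Prop) (F : nat -> set T) (L : nat) :
  P set0 -> (forall A B, P A -> P B -> P (A `|` B)) ->
  (forall l, (l < L)%N -> P (F l)) -> P (\bigcup_(l in `I_L) F l).
Proof.
move=> P0 PU; elim: L => [|L IH] PF; first by rewrite II0 bigcup_set0.
rewrite IIS bigcup_setU bigcup_set1; apply: PU; last exact: PF.
by apply: IH => l /ltnW; apply: PF.
Qed.

Lemma ltr_dist_half (K : numFieldType) (a b c e : K) :
  `|a - b| < e / 2 -> `|c - b| < e / 2 -> `|a - c| < e.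
Proof.
move=> ab cb; rewrite [e]splitr (le_lt_trans (ler_distD b a c)) //.
by rewrite ltrD // distrC.
Qed.

Lemma ltr_dist_third (K : numFieldType) (a a' b b' e : K) :
  `|a - a'| < e / 3%:R -> `|a' - b'| < e / 3%:R -> `|b - b'| < e / 3%:R ->
  `|a - b| < e.
Proof.
move=> aa' a'b' bb'.
have thirds : e / 3%:R + e / 3%:R + e / 3%:R = e.
  by rewrite -mulr2n -mulrSr -(mulr_natr (e / 3%:R)) divfK // pnatr_eq0.
rewrite -thirds (le_lt_trans (ler_distD b' a b)) //.
apply: ltrD; last by rewrite distrC.
exact: le_lt_trans (ler_distD a' a b') (ltrD aa' a'b').
Qed.

Lemma mulr_div_addr1_lt (K : numFieldType) (C t : K) :
  0 <= C -> 0 < t -> C * (t / (C + 1)) < t.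
Proof.
move=> C0 t0; have C1 : 0 < C + 1 by rewrite ltr_wpDl.
rewrite mulrA ltr_pdivrMr // mulrDr mulr1 mulrC ltrDl //.
Qed.

Section EquiFamilies.
Variables (K : numFieldType) (W : Type) (S : set W).

(* The net consists of points of [S]: in part (1) the finite net in E is the
   image of such a net under y |-> u(nu(y) T^K_{m,y}). *)
Definition equi_totally_bounded (Phi : set (W -> K)) : Prop :=
  forall e, 0 < e -> exists t : list W, (forall y, List.In y t -> S y) /\
    forall x, S x -> exists2 y, List.In y t &
      forall phi, Phi phi -> `|phi x - phi y| < e.

Definition finitely_approximable (P Phi : set (W -> K)) : Prop :=
  forall e, 0 < e -> exists L (g : nat -> W -> K),
    (forall l, (l < L)%N -> P (g l)) /\
    forall phi, Phi phi -> exists2 l, (l < L)%N &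
      forall x, S x -> `|phi x - g l x| < e.

Lemma net_of_cells (I : Type) (cells : I -> set W) (s : list I) :
  (forall x, S x -> exists2 i, List.In i s & cells i x) ->
  exists t : list W, (forall y, List.In y t -> S y) /\
    forall x, S x -> exists2 y, List.In y t & exists i, cells i x /\ cells i y.
Proof.
move=> cover; have [[x0 Sx0]|S0] := pselect (exists x, S x); last first.
  by exists [::]; split=> // x Sx; case: S0; exists x.
pose rep i := if pselect (exists y, S y /\ cells i y) is left h
              then sval (cid h) else x0.
have repP i : (exists y, S y /\ cells i y) -> S (rep i) /\ cells i (rep i).
  by rewrite /rep => ?; case: pselect => [h|//]; exact: svalP (cid h).
exists (List.map rep s); split.
  move=> _ /List.in_map_iff [i [<- _]]; rewrite /rep; case: pselect => // h.
  by case: (svalP (cid h)).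
move=> x Sx; have [i si cix] := cover x Sx.
have [Srep cirep] : S (rep i) /\ cells i (rep i) by apply: repP; exists x.
by exists (rep i); [exact: List.in_map | exists i].
Qed.

Lemma equi_totally_bounded0 : equi_totally_bounded set0.
Proof.
move=> e _.
have [t [tS tnet]] := @net_of_cells unit (fun _ => setT) [:: tt]
  (fun x _ => ex_intro2 _ _ tt (or_introl erefl) I).
by exists t; split=> // x /tnet [y ty _]; exists y.
Qed.

Lemma equi_totally_boundedU (Phi1 Phi2 : set (W -> K)) :
  equi_totally_bounded Phi1 -> equi_totally_bounded Phi2 ->
  equi_totally_bounded (Phi1 `|` Phi2).
Proof.
move=> tb1 tb2 e e0; have e2 : 0 < e / 2 by rewrite divr_gt0.
have [t1 [_ net1]] := tb1 _ e2; have [t2 [_ net2]] := tb2 _ e2.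
pose cells (yz : W * W) := [set x |
  (forall phi, Phi1 phi -> `|phi x - phi yz.1| < e / 2) /\
  (forall phi, Phi2 phi -> `|phi x - phi yz.2| < e / 2)].
have cover x : S x -> exists2 yz, List.In yz (List.list_prod t1 t2) & cells yz x.
  move=> Sx; have [y1 t1y1 c1] := net1 x Sx; have [y2 t2y2 c2] := net2 x Sx.
  by exists (y1, y2); [exact: List.in_prod | split].
have [t [tS tnet]] := net_of_cells cover.
exists t; split=> // x Sx; have [y ty [yz [[c1x c2x] [c1y c2y]]]] := tnet x Sx.
exists y => // phi [Phi1phi|Phi2phi].
  exact: ltr_dist_half (c1x _ Phi1phi) (c1y _ Phi1phi).
exact: ltr_dist_half (c2x _ Phi2phi) (c2y _ Phi2phi).
Qed.

Lemma precompact_equi_totally_bounded (psi : W -> K) :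
  precompact (@pK K) (psi @` S) -> equi_totally_bounded [set psi].
Proof.
move=> pc e e0; have e2 : 0 < e / 2 by rewrite divr_gt0.
have [N [z net]] := pc 1%N (fun _ => tt) _ e2.
pose cells k := [set x | `|psi x - z k| < e / 2].
have cover x : S x -> exists2 k, List.In k (List.seq 0 N) & cells k x.
  move=> Sx; have [k [kN /(_ 0%N isT) close]] := net _ (imageP psi Sx).
  exists k => //; apply/List.in_seq.
  by split; [apply/ssrnat.leP | apply/ssrnat.ltP].
have [t [tS tnet]] := net_of_cells cover.
exists t; split=> // x Sx; have [y ty [k [ckx cky]]] := tnet x Sx.
by exists y => // _ ->; exact: ltr_dist_half ckx cky.
Qed.

Lemma equi_totally_bounded_approx (P Phi : set (W -> K)) :
  (forall psi, P psi -> equi_totally_bounded [set psi]) ->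
  finitely_approximable P Phi -> equi_totally_bounded Phi.
Proof.
move=> tbP approx e e0; have e3 : 0 < e / 3%:R by rewrite divr_gt0.
have [L [g [gP gPhi]]] := approx _ e3.
have : equi_totally_bounded (\bigcup_(l in `I_L) [set g l]).
  apply: bigcup_II_ind => [|? ? |l /gP]; [exact: equi_totally_bounded0|
                                         exact: equi_totally_boundedU|exact: tbP].
move=> /(_ _ e3) [t [tS tnet]]; exists t; split=> // x Sx.
have [y ty close] := tnet x Sx; exists y => // phi /gPhi [l lL near_g].
exact: ltr_dist_third (near_g x Sx) (close _ (ex_intro2 _ _ l lL erefl))
                      (near_g y (tS y ty)).
Qed.

Variables (X : Type) (pi : W -> X) (Kfrak : set (set X)).

Definition equi_vanishing (Phi : set (W -> K)) : Prop :=
  forall d, 0 < d -> exists2 Kc, Kfrak Kc &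
    forall phi, Phi phi -> forall x, S x -> ~ Kc (pi x) -> `|phi x| < d.

Hypothesis Kfrak_neq0 : exists K0, Kfrak K0.
Hypothesis KfrakU : forall K1 K2, Kfrak K1 -> Kfrak K2 -> Kfrak (K1 `|` K2).

Lemma equi_vanishing0 : equi_vanishing set0.
Proof. by have [K0 K0in] := Kfrak_neq0; exists K0. Qed.

Lemma equi_vanishingU (Phi1 Phi2 : set (W -> K)) :
  equi_vanishing Phi1 -> equi_vanishing Phi2 -> equi_vanishing (Phi1 `|` Phi2).
Proof.
move=> v1 v2 d d0; have [K1 K1in small1] := v1 d d0.
have [K2 K2in small2] := v2 d d0.
exists (K1 `|` K2); first exact: KfrakU.
move=> phi [Phi1phi|Phi2phi] x Sx notK.
  by apply: small1 => // K1x; apply: notK; left.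
by apply: small2 => // K2x; apply: notK; right.
Qed.

Lemma equi_vanishing_approx (P Phi : set (W -> K)) :
  (forall psi, P psi -> equi_vanishing [set psi]) ->
  finitely_approximable P Phi -> equi_vanishing Phi.
Proof.
move=> vP approx d d0; have d2 : 0 < d / 2 by rewrite divr_gt0.
have [L [g [gP gPhi]]] := approx _ d2.
have : equi_vanishing (\bigcup_(l in `I_L) [set g l]).
  apply: bigcup_II_ind => [|? ? |l /gP]; [exact: equi_vanishing0|
                                         exact: equi_vanishingU|exact: vP].
move=> /(_ _ d2) [Kc Kcin small]; exists Kc => //.
move=> phi /gPhi [l lL near_g] x Sx notK.
rewrite -[phi x]subr0; apply: ltr_dist_half (near_g x Sx) _.
by rewrite sub0r normrN; apply: small => //; exists l.
Qed.

End EquiFamilies.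

Section FVdataB.
Variables (K : numFieldType) (Omega M W : Type) (omega : M -> set W)
  (V : lmodType K) (AP : set (Omega -> V)) (domT : M -> set (Omega -> V))
  (T : M -> (Omega -> V) -> W -> V).
Hypothesis data : FV_data_ok omega AP domT T.

Lemma FV_data_okB m f g x : omega m x -> domT m f -> domT m g ->
  T m (fun w => f w - g w) x = T m f x - T m g x.
Proof.
move=> mx f_in g_in; have [_ [_ Tlin]] := data.
have -> : (fun w => f w - g w) = (fun w => (-1 : K) *: g w + f w).
  by apply: funext => w; rewrite scaleN1r addrC.
by rewrite Tlin // scaleN1r addrC.
Qed.
End FVdataB.

Section ScalarFV.
Variables (K : numFieldType) (Omega J M W : Type) (omega : M -> set W)
  (nu : J -> M -> W -> K) (APK : set (Omega -> K^o))
  (domTK : M -> set (Omega -> K^o)) (TK : M -> (Omega -> K^o) -> W -> K^o).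
Hypothesis dataK : FV_data_ok omega APK domTK TK.
Hypothesis nu_ge0 : forall j m x, omega m x -> 0 <= nu j m x.

Local Notation FT := (FVt omega nu APK domTK TK).
Local Notation FV_open := (@FV_open K Omega J M W omega nu APK domTK TK).
Local Notation FV_compact := (@FV_compact K Omega J M W omega nu APK domTK TK).
Local Notation dual := (in_FVdual omega nu APK domTK TK).

Definition weightedT j m (f : Omega -> K^o) : W -> K :=
  fun x => nu j m x * TK m f x.

Local Notation weightedFV j m := (fun h : FT => weightedT j m (sval h)).

Lemma normr_weightedT j m f x : omega m x ->
  `|weightedT j m f x| = pK tt (TK m f x) * nu j m x.
Proof. by move=> mx; rewrite normrM (ger0_norm (nu_ge0 j mx)) mulrC. Qed.

Lemma FVt_dom (h : FT) m : domTK m (sval h).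
Proof. by case: (svalP h) => _ []. Qed.

Definition FVball j m (g : FT) (r : K) : set FT :=
  [set h | FVlt omega nu (@pK K) TK j m tt (fun w => sval h w - sval g w) r].

Lemma weightedT_FVball j m g r h x : FVball j m g r h -> omega m x ->
  `|weightedT j m (sval h) x - weightedT j m (sval g) x| < r.
Proof.
move=> [c [cr hc]] mx.
rewrite -mulrBr -(FV_data_okB dataK mx (FVt_dom h m) (FVt_dom g m)).
by rewrite -/(weightedT j m _ x) normr_weightedT // (le_lt_trans (hc x mx)).
Qed.

Lemma FVball_center j m g r : 0 < r -> FVball j m g r g.
Proof.
move=> r0; exists 0; split=> // x mx.
rewrite (FV_data_okB dataK mx (FVt_dom g m) (FVt_dom g m)).
by rewrite subrr /pK normr0 mul0r.
Qed.

Lemma FVball_open j m g r : FV_open (FVball j m g r).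
Proof.
move=> h [c [cr hc]]; exists 1%N, (fun _ => (j, m)), (r - c).
split=> [|h' /(_ 0%N isT) [c' [c'lt hc']]]; first by rewrite subr_gt0.
exists (c' + c); split; first by rewrite -ltrBrDr.
move=> x mx; have := hc x mx; have := hc' x mx.
rewrite /pK !(FV_data_okB dataK mx (FVt_dom _ m) (FVt_dom _ m)) => le' le.
apply: le_trans (lerD le' le); rewrite -mulrDl ler_wpM2r ?nu_ge0 //.
exact: ler_distD.
Qed.

Lemma FV_compact0 : FV_compact set0.
Proof. by move=> F _ _; exists 0%N, (fun _ => set0). Qed.

Lemma FV_compactU (B1 B2 : set FT) :
  FV_compact B1 -> FV_compact B2 -> FV_compact (B1 `|` B2).
Proof.
move=> c1 c2 F Fopen cover.
have [n1 [U1 [FU1 coverU1]]] := c1 F Fopen (fun f B1f => cover f (or_introl B1f)).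
have [n2 [U2 [FU2 coverU2]]] := c2 F Fopen (fun f B2f => cover f (or_intror B2f)).
exists (n1 + n2)%N, (fun k => if (k < n1)%N then U1 k else U2 (k - n1)%N).
split=> [k kn|f [/coverU1 [k [kn1 U1f]]|/coverU2 [k [kn2 U2f]]]].
- case: ifPn => [/FU1 //|]; rewrite -leqNgt => n1k.
  by apply: FU2; rewrite ltn_subLR.
- by exists k; rewrite kn1 ltn_addr.
- by exists (n1 + k)%N; rewrite ltn_add2l kn2 ltnNge leq_addr addKn.
Qed.

Lemma FV_compact_finitely_approximable B j m : FV_compact B ->
  finitely_approximable (omega m) (range (weightedFV j m))
    ((weightedFV j m) @` B).
Proof.
move=> cB e e0.
pose F := [set U | exists2 g, B g & U = FVball j m g e].
have Fopen U : F U -> FV_open U by case=> g _ ->; exact: FVball_open.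
have cover f : B f -> exists U, F U /\ U f.
  by move=> Bf; exists (FVball j m f e); split; [exists f | exact: FVball_center].
have [L [Us [FUs coverUs]]] := cB F Fopen cover.
have centers l : exists psi : W -> K, (l < L)%N ->
    exists2 h : FT, psi = weightedT j m (sval h) & Us l = FVball j m h e.
  have [lL|_] := ltnP l L; last by exists (fun _ => 0).
  by have [h _ ->] := FUs l lL; exists (weightedT j m (sval h)) => _; exists h.
have [g gP] := choice centers.
exists L, g; split=> [l /gP [h -> _]|_ [f Bf <-]]; first by exists h.
have [l [lL Ulf]] := coverUs f Bf; exists l => // x mx.
have [h -> Ul] := gP l lL; rewrite Ul in Ulf.
exact: weightedT_FVball Ulf mx.
Qed.

Lemma in_FVdual_comb (c : K) y1 y2 :
  dual y1 -> dual y2 -> dual (fun f => c * y1 f + y2 f).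
Proof.
move=> [lin1 [n1 [ix1 [C1 [C10 bd1]]]]] [lin2 [n2 [ix2 [C2 [C20 bd2]]]]].
split=> [c' f g h hfg|].
  by rewrite (lin1 c' f g h hfg) (lin2 c' f g h hfg); ring.
exists (n1 + n2)%N, (fun k => if (k < n1)%N then ix1 k else ix2 (k - n1)%N),
  (`|c| * C1 + C2); split=> [|f b fb]; first by rewrite addr_ge0 ?mulr_ge0.
have le1 : `|y1 f| <= C1 * b.
  by apply: bd1 => k kn1; have := fb k (ltn_addr _ kn1); rewrite kn1.
have le2 : `|y2 f| <= C2 * b.
  apply: bd2 => k kn2; have := fb (n1 + k)%N.
  by rewrite ltn_add2l kn2 ltnNge leq_addr addKn; apply.
rewrite (le_trans (ler_normD _ _)) // normrM mulrDl -mulrA lerD //.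
exact: ler_wpM2l.
Qed.

Lemma in_FVdualB y1 y2 : dual y1 -> dual y2 -> dual (fun f => y1 f - y2 f).
Proof.
move=> d1 d2; suff -> : (fun f => y1 f - y2 f) = (fun f => -1 * y2 f + y1 f).
  exact: in_FVdual_comb.
by apply: funext => f; rewrite mulN1r addrC.
Qed.

Lemma TK_comb m x (c : K) (f g h : FT) : omega m x ->
  sval h = (fun w => c *: sval f w + sval g w) ->
  TK m (sval h) x = c * TK m (sval f) x + TK m (sval g) x.
Proof.
move=> mx ->; have [_ [_ Tlin]] := dataK.
exact: Tlin (FVt_dom f m) (FVt_dom g m) x mx.
Qed.

Definition evalT j m x : FT -> K := fun f => weightedT j m (sval f) x.

Lemma evalT_dual j m x : omega m x -> dual (evalT j m x).
Proof.
move=> mx; split=> [c f g h /(TK_comb mx) TKh|].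
  by rewrite /evalT /weightedT TKh mulrDr mulrCA.
exists 1%N, (fun _ => (j, m)), 1; split=> // f b /(_ 0%N isT) le.
by rewrite mul1r /evalT normr_weightedT //; exact: le.
Qed.

Hypothesis nu_pos : forall m x, omega m x -> exists j, 0 < nu j m x.

Lemma TKx_dual m x : omega m x -> dual (TKx omega nu APK domTK TK m x).
Proof.
move=> mx; have [j nu0] := nu_pos mx.
split=> [c f g h /(TK_comb mx) //|].
exists 1%N, (fun _ => (j, m)), (nu j m x)^-1; split=> [|f b /(_ 0%N isT) le].
  by rewrite invr_ge0 ltW.
by rewrite mulrC ler_pdivlMr //; exact: le.
Qed.

Variables (X : Type) (pi : W -> X) (Kfrak : set (set X)).
Local Notation APpiK := (APpi omega nu (@pK K) domTK TK pi Kfrak).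

Lemma APpi_equi_vanishing f j m :
  APpiK f -> equi_vanishing (omega m) pi Kfrak [set weightedT j m f].
Proof.
case=> _ ap d d0; have [Kc [Kcin [[c [cd tail]] _]]] := ap d d0 j m tt.
exists Kc => // _ -> x mx notK.
by rewrite normr_weightedT // (le_lt_trans (tail x mx notK)).
Qed.

Lemma APpi_precompact f j m :
  APpiK f -> precompact (@pK K) (weightedT j m f @` omega m).
Proof.
case=> _ ap n as_ e e0; have [Kc [_ [[c [ce tail]] pc]]] := ap e e0 j m tt.
have [N [z net]] := pc n as_ e e0.
exists N.+1, (fun k => if (k < N)%N then z k else 0) => _ [x mx <-].
have [Kx|notK] := pselect (Kc (pi x)).
  have [k [kN close]] := net (nu j m x *: TK m f x)
    (ex_intro _ x (conj mx (conj Kx erefl))).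
  by exists k; rewrite kN ltnS ltnW.
exists N; rewrite ltnn ltnSn subr0; split=> // i _.
by rewrite /pK normr_weightedT // (le_lt_trans (tail x mx notK)).
Qed.

Hypothesis FV_APpi : forall f, inFV omega nu (@pK K) APK domTK TK f -> APpiK f.
Hypothesis Kfrak_neq0 : exists K0, Kfrak K0.
Hypothesis KfrakU : forall K1 K2, Kfrak K1 -> Kfrak K2 -> Kfrak (K1 `|` K2).

Lemma FV_compact_equi_vanishing B j m : FV_compact B ->
  equi_vanishing (omega m) pi Kfrak ((weightedFV j m) @` B).
Proof.
move=> cB; refine (equi_vanishing_approx Kfrak_neq0 KfrakU _
  (FV_compact_finitely_approximable j m cB)).
by move=> _ [h _ <-]; exact: APpi_equi_vanishing (FV_APpi (svalP h)).
Qed.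

Lemma FV_compact_equi_totally_bounded B j m : FV_compact B ->
  equi_totally_bounded (omega m) ((weightedFV j m) @` B).
Proof.
move=> cB; refine (equi_totally_bounded_approx _
  (FV_compact_finitely_approximable j m cB)).
move=> _ [h _ <-]; apply: precompact_equi_totally_bounded.
exact: APpi_precompact (FV_APpi (svalP h)).
Qed.

End ScalarFV.

Section Seminorms.
Variables (K : numFieldType) (V : lmodType K) (A : Type) (p : A -> V -> K).
Hypothesis p_seminorm : seminorm_family p.

Lemma seminorm_ge0 a x : 0 <= p a x.
Proof. by case: (p_seminorm a). Qed.

Lemma seminormZ a (c : K) x : p a (c *: x) = `|c| * p a x.
Proof. by case: (p_seminorm a) => _ []. Qed.

Lemma separating_inhabited :
  separating_family p -> (exists x : V, x <> 0) -> inhabited A.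
Proof.
move=> sep [x x0]; apply: contra_notP x0 => noA.
by apply: sep => a; case: noA.
Qed.

Hypothesis p_directed : directed_family p.

Lemma directed_family_finite (a0 : A) (n : nat) (as_ : nat -> A) :
  exists a (C : K), 0 < C /\
    forall i, (i < n)%N -> forall x, p (as_ i) x <= C * p a x.
Proof.
elim: n => [|n [a [C [C0 dom]]]]; first by exists a0, 1.
have [a' [C' [C'0 dom']]] := p_directed a (as_ n).
exists a', (C * C' + C'); split=> [|i]; first by rewrite addr_gt0 // mulr_gt0.
have pC' x : 0 <= C' * p a' x.
  by apply: mulr_ge0; [exact: ltW | exact: seminorm_ge0].
rewrite ltnS leq_eqVlt => /orP [/eqP -> x|/dom le x].
  rewrite (le_trans (dom' x).2) // mulrDl lerDr -mulrA.
  exact: mulr_ge0 (ltW C0) (pC' x).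
rewrite (le_trans (le x)) // (le_trans (ler_wpM2l (ltW C0) (dom' x).1)) //.
by rewrite mulrDl mulrA lerDl.
Qed.

Lemma in_dual0 (e' : V -> K) : in_dual p e' -> e' 0 = 0.
Proof.
case=> lin _; have := lin 1 0 0; rewrite scaler0 addr0 mul1r.
by rewrite -{1}[e' 0]addr0 => /addrI /esym.
Qed.

Lemma in_dualZ (e' : V -> K) c x : in_dual p e' -> e' (c *: x) = c * e' x.
Proof.
by move=> e'd; rewrite -[c *: x]addr0 (proj1 e'd) (in_dual0 e'd) addr0.
Qed.

Lemma in_dualB (e' : V -> K) x y : in_dual p e' -> e' (x - y) = e' x - e' y.
Proof.
by move=> e'd; rewrite addrC -scaleN1r (proj1 e'd) mulN1r addrC.
Qed.

Lemma in_dual_bound (a0 : A) (e' : V -> K) : in_dual p e' ->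
  exists a (D : K), 0 <= D /\ forall x, `|e' x| <= D * p a x.
Proof.
case=> _ [n [as_ [C [C0 bound]]]].
have [a [D [D0 dom]]] := directed_family_finite a0 n as_.
exists a, (C * D); split=> [|x]; first exact: mulr_ge0 C0 (ltW D0).
by rewrite -mulrA; apply: bound => i ilt; exact: dom.
Qed.

End Seminorms.

Section Transfer.
Variables (K : numFieldType) (Omega J M W : Type) (omega : M -> set W)
  (nu : J -> M -> W -> K) (APK : set (Omega -> K^o))
  (domTK : M -> set (Omega -> K^o)) (TK : M -> (Omega -> K^o) -> W -> K^o)
  (E : lmodType K) (AE : Type) (pE : AE -> E -> K)
  (domTE : M -> set (Omega -> E)) (TE : M -> (Omega -> E) -> W -> E)
  (X : Type) (pi : W -> X) (Kfrak : set (set X)) (a0 : AE).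
Hypothesis dataK : FV_data_ok omega APK domTK TK.
Hypothesis nu_ge0 : forall j m x, omega m x -> 0 <= nu j m x.
Hypothesis nu_pos : forall m x, omega m x -> exists j, 0 < nu j m x.
Hypothesis pE_seminorm : seminorm_family pE.
Hypothesis pE_directed : directed_family pE.

Local Notation FT := (FVt omega nu APK domTK TK).
Local Notation dual := (in_FVdual omega nu APK domTK TK).
Local Notation eps := (in_eps omega nu APK domTK TK pE).
Local Notation S := (Smap omega nu APK domTK TK).
Local Notation evalT := (@evalT K Omega J M W omega nu APK domTK TK).
Local Notation TKx := (TKx omega nu APK domTK TK).

Lemma in_eps_bound u a : eps u -> exists B (C : K),
  FV_compact B /\ 0 <= C /\ forall y c, dual y ->
    (forall f, B f -> `|y f| <= c) -> pE a (u y) <= C * c.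
Proof.
case=> _ /(_ a) [n [Bs [C [Bs_cpt [C0 bound]]]]].
exists (\bigcup_(k in `I_n) Bs k), C; split; last split=> // y c yd yB.
  apply: bigcup_II_ind => [|? ?|k /Bs_cpt []//]; first exact: FV_compact0.
  exact: FV_compactU.
by apply: bound => // k f kn Bkf; apply: yB; exists k.
Qed.

Lemma in_epsB u y1 y2 : eps u -> dual y1 -> dual y2 ->
  u (fun f => y1 f - y2 f) = u y1 - u y2.
Proof.
move=> [lin _] d1 d2.
have -> : (fun f => y1 f - y2 f) = (fun f => -1 * y2 f + y1 f).
  by apply: funext => f; rewrite mulN1r addrC.
by rewrite lin // scaleN1r addrC.
Qed.

Lemma in_epsZ u c y : eps u -> dual y -> u (fun f => c * y f) = c *: u y.
Proof.
move=> hu yd; have d0 := in_FVdualB yd yd.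
have -> : (fun f => c * y f) = (fun f => c * y f + (y f - y f)).
  by apply: funext => f; rewrite subrr addr0.
by rewrite (proj1 hu) // in_epsB // subrr addr0.
Qed.

Hypothesis FV_APpi : forall f, inFV omega nu (@pK K) APK domTK TK f ->
  APpi omega nu (@pK K) domTK TK pi Kfrak f.
Hypothesis Kfrak_neq0 : exists K0, Kfrak K0.
Hypothesis KfrakU : forall K1 K2, Kfrak K1 -> Kfrak K2 -> Kfrak (K1 `|` K2).

Section SmapEstimates.
Variables (u : (FT -> K) -> E) (m : M).
Hypothesis u_eps : eps u.
Hypothesis TE_Smap : forall x, omega m x -> TE m (S u) x = u (TKx m x).

Lemma u_evalT j x : omega m x -> u (evalT j m x) = nu j m x *: TE m (S u) x.
Proof.
move=> mx; rewrite TE_Smap // -in_epsZ //.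
exact (TKx_dual dataK nu_pos mx).
Qed.

Lemma Smap_tail j a e : 0 < e -> exists2 Kc, Kfrak Kc & exists2 c, c < e &
  forall x, omega m x -> ~ Kc (pi x) -> pE a (TE m (S u) x) * nu j m x <= c.
Proof.
move=> e0; have [B [C [cB [C0 uB]]]] := in_eps_bound a u_eps.
have d0 : 0 < e / (C + 1) by rewrite divr_gt0 // ltr_wpDl.
have [Kc Kcin small] := FV_compact_equi_vanishing dataK nu_ge0 FV_APpi
  Kfrak_neq0 KfrakU j m cB d0.
exists Kc => //; exists (C * (e / (C + 1))); first exact: mulr_div_addr1_lt.
move=> x mx notK; rewrite mulrC -(ger0_norm (nu_ge0 j mx)).
rewrite -(seminormZ pE_seminorm) -u_evalT //; apply: uB => [|f Bf].
  exact (evalT_dual dataK nu_ge0 j mx).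
by apply/ltW/(small _ (imageP _ Bf)).
Qed.

Lemma Smap_precompact j :
  precompact pE [set nu j m x *: TE m (S u) x | x in omega m].
Proof.
move=> n as_ e e0.
have [a [C [C0 dom]]] := directed_family_finite pE_seminorm pE_directed a0 n as_.
have [B [D [cB [D0 uB]]]] := in_eps_bound a u_eps.
pose eta := e / C / (D + 1).
have eta0 : 0 < eta by rewrite !divr_gt0 // ltr_wpDl.
have [t [tS tnet]] :=
  FV_compact_equi_totally_bounded dataK nu_ge0 FV_APpi j m cB eta0.
pose zs := List.map (fun y => u (evalT j m y)) t.
exists (length zs), (fun k => List.nth k zs 0) => _ [x mx <-].
have [y ty close] := tnet x mx.
have [k [kN nthk]] := List.In_nth zs _ 0 (List.in_map _ _ _ ty).
exists k; rewrite nthk; split=> [|i ilt]; first exact/ssrnat.ltP.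
have dx := evalT_dual dataK nu_ge0 j mx.
have dy := evalT_dual dataK nu_ge0 j (tS y ty).
rewrite -u_evalT // -in_epsB // (le_lt_trans (dom i ilt _)) //.
rewrite -ltr_pdivlMl // mulrC.
apply: le_lt_trans (uB _ eta (in_FVdualB dx dy) _) (mulr_div_addr1_lt D0 _).
  by move=> f Bf; apply/ltW/(close _ (imageP _ Bf)).
by rewrite divr_gt0.
Qed.

End SmapEstimates.

Lemma Smap_APpi u : eps u ->
  (forall m, domTE m (S u) /\
     forall x, omega m x -> TE m (S u) x = u (TKx m x)) ->
  APpi omega nu pE domTE TE pi Kfrak (S u).
Proof.
move=> hu TS; split=> [m|e e0 j m a]; first by case: (TS m).
have [Kc Kcin [c ce tail]] := Smap_tail hu (TS m).2 j a e0.
exists Kc; split=> //; split; first by exists c.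
move=> n as_ e' e'0; have [N [z net]] := Smap_precompact hu (TS m).2 j n as_ e'0.
by exists N, z => _ [x [mx [_ ->]]]; apply: net; exists x.
Qed.

Lemma in_dual_comp_APpi (e' : E -> K) (f : Omega -> E) : in_dual pE e' ->
  (forall m, domTK m (e' \o f) /\
     forall x, omega m x -> TK m (e' \o f) x = e' (TE m f x)) ->
  APpi omega nu pE domTE TE pi Kfrak f ->
  APpi omega nu (@pK K) domTK TK pi Kfrak (e' \o f).
Proof.
move=> e'd Te' [_ apf].
have [a [D [D0 e'le]]] := in_dual_bound pE_seminorm pE_directed a0 e'd.
split=> [m|e e0 j m []]; first by case: (Te' m).
have d0 : 0 < e / (D + 1) by rewrite divr_gt0 // ltr_wpDl.
have [Kc [Kcin [[c [cd tail]] pc]]] := apf _ d0 j m a.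
have e'T x :
    omega m x -> nu j m x *: TK m (e' \o f) x = e' (nu j m x *: TE m f x).
  by move=> mx; rewrite (proj2 (Te' m)) // (in_dualZ _ _ e'd).
exists Kc; split=> //; split.
  exists (D * c); split.
    by rewrite (le_lt_trans _ (mulr_div_addr1_lt D0 e0)) // ler_wpM2l // ltW.
  move=> x mx notK; rewrite -(normr_weightedT TK nu_ge0 j _ mx).
  rewrite [weightedT _ _ _ _ _ _](e'T x mx) (le_trans (e'le _)) // ler_wpM2l //.
  by rewrite (seminormZ pE_seminorm) ger0_norm ?nu_ge0 // mulrC tail.
move=> n as_ e'' e''0.
have d''0 : 0 < e'' / (D + 1) by rewrite divr_gt0 // ltr_wpDl.
have [N [z net]] := pc 1%N (fun _ => a) _ d''0.
exists N, (e' \o z) => _ [x [mx [Kx ->]]].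
have [k [kN close]] := net _ (ex_intro _ x (conj mx (conj Kx erefl))).
exists k; split=> // i _; rewrite /pK e'T // -(in_dualB _ _ e'd).
rewrite (le_lt_trans (e'le _)) // (le_lt_trans _ (mulr_div_addr1_lt D0 e''0)) //.
by rewrite ler_wpM2l // ltW // (close 0%N isT).
Qed.

End Transfer.

Theorem proposition4p13
  (* the scalar field K = R or C *)
  (K : numFieldType) (HK : RorC K)
  (* E: non-trivial Hausdorff lcs with directed fundamental system (pE a) *)
  (E : lmodType K) (AE : Type) (pE : AE -> E -> K)
  (HE : seminorm_family pE /\ directed_family pE /\ separating_family pE /\
        exists x : E, x <> 0)
  (* weights *)
  (Omega J M W : Type) (HJ : inhabited J) (HM : inhabited M)
  (omega : M -> set W) (Homega : forall m, exists x, omega m x)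
  (nu : J -> M -> W -> K)
  (Hnu0 : forall j m x, omega m x -> 0 <= nu j m x)
  (Hnu : forall m x, omega m x -> exists j, 0 < nu j m x)
  (* Y = K *)
  (APK : set (Omega -> K^o)) (domTK : M -> set (Omega -> K^o))
  (TK : M -> (Omega -> K^o) -> W -> K^o)
  (HdataK : FV_data_ok omega APK domTK TK)
  (* Y = E *)
  (APE : set (Omega -> E)) (domTE : M -> set (Omega -> E))
  (TE : M -> (Omega -> E) -> W -> E)
  (HdataE : FV_data_ok omega APE domTE TE)
  (* generator: FV(Omega) and FV(Omega,E) are dom-spaces *)
  (HdomK : FV_separating omega nu (@pK K) APK domTK TK /\
           FV_directed omega nu (@pK K) APK domTK TK /\
           forall x : Omega, in_FVdual omega nu APK domTK TK
                               (delta omega nu APK domTK TK x))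
  (HdomE : FV_separating omega nu pE APE domTE TE /\
           FV_directed omega nu pE APE domTE TE)
  (* X, the family Kfrak closed under finite unions, pi *)
  (X : Type) (Kfrak : set (set X))
  (HKfrak : forall K1 K2, Kfrak K1 -> Kfrak K2 -> Kfrak (K1 `|` K2))
  (pi : W -> X)
  (* FV(Omega,Y) is a linear subspace of AP_{pi,Kfrak}(Omega,Y) *)
  (HAPK : linear_subspace (APpi omega nu (@pK K) domTK TK pi Kfrak) /\
          forall f, inFV omega nu (@pK K) APK domTK TK f ->
                    APpi omega nu (@pK K) domTK TK pi Kfrak f)
  (HAPE : linear_subspace (APpi omega nu pE domTE TE pi Kfrak) /\
          forall f, inFV omega nu pE APE domTE TE f ->
                    APpi omega nu pE domTE TE pi Kfrak f) :
  (* (1) *)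
  ((forall u, in_eps omega nu APK domTK TK pE u ->
      forall m, domTE m (Smap omega nu APK domTK TK u) /\
        forall x, omega m x ->
          TE m (Smap omega nu APK domTK TK u) x =
          u (TKx omega nu APK domTK TK m x)) ->
   forall u, in_eps omega nu APK domTK TK pE u ->
     APpi omega nu pE domTE TE pi Kfrak (Smap omega nu APK domTK TK u))
  /\
  (* (2) *)
  ((forall e' : E -> K, in_dual pE e' ->
      forall f, inFV omega nu pE APE domTE TE f ->
      forall m, domTK m (e' \o f) /\
        forall x, omega m x -> TK m (e' \o f) x = e' (TE m f x)) ->
   forall (e' : E -> K) (f : Omega -> E), in_dual pE e' ->
     inFV omega nu pE APE domTE TE f ->
     APpi omega nu (@pK K) domTK TK pi Kfrak (e' \o f)).
Proof.
case: HE => pE_seminorm [pE_directed [pE_separating E_nontrivial]].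
have [a0] := separating_inhabited pE_separating E_nontrivial.
have Kfrak_neq0 : exists K0, Kfrak K0.
  case: HJ HM => j0 [m0]; have [_ AP0] := (proj1 HAPK).1.
  by have [K0 [K0in _]] := AP0 1 ltr01 j0 m0 tt; exists K0.
split=> [TS u hu|Te' e' f e'd fFV].
  exact: Smap_APpi a0 HdataK Hnu0 Hnu pE_seminorm pE_directed HAPK.2
    Kfrak_neq0 HKfrak u hu (TS u hu).
exact: in_dual_comp_APpi a0 Hnu0 pE_seminorm pE_directed e' f e'd
  (Te' e' e'd f fFV) (HAPE.2 f fFV).
Qed.
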